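(* Suppose $\mathbf{U}\in\mathbb{R}^{N\times n}$ is the matrix of the first $n$ left singular vectors of a data matrix $\mathbf{X}\in\mathbb{R}^{N\times n_s}$, and $\boldsymbol{\Sigma}\in\mathbb{R}^{n\times n}$ is the corresponding diagonal matrix of (nonzero) singular values $\{\sigma_j\}_{j=1}^n$. Let $\hat{\mathbf{X}}=\mathbf{U}^\intercal\mathbf{X}\in\mathbb{R}^{n\times n_s}$ and $\hat{\mathbf{X}}_t=\mathbf{U}^\intercal\mathbf{X}_t\in\mathbb{R}^{n\times n_s}$, where $\mathbf{X}_t$ is an approximation (e.g. by finite differences) to the time derivative of the snapshots in $\mathbf{X}$. Then the unique solution to the operator inference problem of size $n$ is given by \[ \hat{\mathbf{D}} = \operatorname*{argmin}_{\mathbf{D}\in\mathbb{R}^{n\times n}}\left\|\hat{\mathbf{X}}_t - \mathbf{D}\hat{\mathbf{X}}\right\|^2 = \hat{\mathbf{X}}_t\hat{\mathbf{X}}^\intercal\boldsymbol{\Sigma}^{-2}.\] Moreover, for any $n'<n$, the submatrix $\hat{\mathbf{D}}'\in\mathbb{R}^{n'\times n'}$ formed by extracting the first $n'$ rows and columns of $\hat{\mathbf{D}}$ is the solution to the corresponding operator inference problem of size $n'$ (i.e. the same problem with $\mathbf{U}$ replaced by its first $n'$ columns).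
   Context: Operator inference (OpInf) learns a reduced linear operator $\hat{\mathbf{D}}$ for a reduced model $\dot{\hat{\mathbf{x}}}=\hat{\mathbf{D}}\hat{\mathbf{x}}$ from projected snapshot data by least squares; the norm is the Frobenius norm. *)

From HB Require Import structures.
From mathcomp Require Import all_boot all_order all_algebra.
Set Implicit Arguments. Unset Strict Implicit. Unset Printing Implicit Defensive.
Import Order.TTheory GRing.Theory Num.Theory.
Local Open Scope ring_scope.

Definition frob2 (R : realFieldType) (m k : nat) (M : 'M[R]_(m, k)) : R :=
  \sum_(i < m) \sum_(j < k) (M i j) ^+ 2.

Definition is_svd (R : realFieldType) (N ns : nat) (X : 'M[R]_(N, ns))
    (W : 'M[R]_N) (s : nat -> R) (V : 'M[R]_ns) : Prop :=
  [/\ W^T *m W = 1%:M /\ W *m W^T = 1%:M,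
      V^T *m V = 1%:M /\ V *m V^T = 1%:M,
      (forall k, (k < minn N ns)%N -> 0 <= s k),
      (forall k l, (k <= l)%N -> (l < minn N ns)%N -> s l <= s k) &
      X = W *m (\matrix_(i < N, j < ns) (if (i == j :> nat) then s i else 0))
            *m V^T].

Definition opinf_obj (R : realFieldType) (N ns k : nat) (U : 'M[R]_(N, k))
    (X Xt : 'M[R]_(N, ns)) (D : 'M[R]_k) : R :=
  frob2 (U^T *m Xt - D *m (U^T *m X)).

Definition opinf_min (R : realFieldType) (N ns k : nat) (U : 'M[R]_(N, k))
    (X Xt : 'M[R]_(N, ns)) (D : 'M[R]_k) : Prop :=
  forall D' : 'M[R]_k, opinf_obj U X Xt D <= opinf_obj U X Xt D'.

Definition opinf_unique_solution (R : realFieldType) (N ns k : nat)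
    (U : 'M[R]_(N, k)) (X Xt : 'M[R]_(N, ns)) (D : 'M[R]_k) : Prop :=
  opinf_min U X Xt D /\ (forall D', opinf_min U X Xt D' -> D' = D).

From HB Require Import structures.
From mathcomp Require Import all_boot all_order all_algebra.
Import Order.TTheory GRing.Theory Num.Theory.
Local Open Scope ring_scope.

(* With B := U^T X, the objective ||A - D B||^2 splits by Pythagoras into
   ||A - D0 B||^2 + ||(D0 - D) B||^2, where D0 := A B^T (B B^T)^-1 solves the
   normal equations; when B B^T is invertible the second term vanishes only
   at D = D0.  If U consists of the leading left singular vectors, then
   B B^T = Sigma^2 is diagonal, so entry (i, j) of D0 only involves columns i
   and j of U: the leading n' x n' block of the size-n solution is therefore
   the size-n' solution. *)

Section Frobenius.

Context {R : realFieldType}.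

Lemma frob2_trace m k (M : 'M[R]_(m, k)) : frob2 M = \tr (M *m M^T).
Proof.
rewrite /frob2 /mxtrace; apply: eq_bigr => i _; rewrite mxE.
by apply: eq_bigr => j _; rewrite !mxE expr2.
Qed.

Lemma frob2_ge0 m k (M : 'M[R]_(m, k)) : 0 <= frob2 M.
Proof. by apply: sumr_ge0 => i _; apply: sumr_ge0 => j _; apply: sqr_ge0. Qed.

Lemma frob2_eq0 m k (M : 'M[R]_(m, k)) : frob2 M = 0 -> M = 0.
Proof.
have rows_ge0 i : 0 <= \sum_(j < k) M i j ^+ 2.
  by apply: sumr_ge0 => j _; apply: sqr_ge0.
move/psumr_eq0P=> /(_ (fun i _ => rows_ge0 i)) row0; apply/matrixP => i j; rewrite mxE.
have /psumr_eq0P entry0 := row0 i isT.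
by apply/eqP; rewrite -sqrf_eq0 entry0 // => l _; apply: sqr_ge0.
Qed.

Lemma frob2D_orthogonal m k (P Q : 'M[R]_(m, k)) :
  P *m Q^T = 0 -> frob2 (P + Q) = frob2 P + frob2 Q.
Proof.
move=> PQ0; have QP0 : Q *m P^T = 0 by rewrite -[LHS]trmxK trmx_mul trmxK PQ0 trmx0.
by rewrite !frob2_trace linearD /= mulmxDl !mulmxDr PQ0 QP0 addr0 add0r mxtraceD.
Qed.

End Frobenius.

Section LeastSquares.

Context {R : realFieldType} {k m : nat} (A B : 'M[R]_(k, m)).
Hypothesis gram_unit : B *m B^T \in unitmx.

Let D0 := A *m B^T *m invmx (B *m B^T).

Lemma lsq_residual_orthogonal : (A - D0 *m B) *m B^T = 0.
Proof. by rewrite mulmxBl -mulmxA mulmxKV // subrr. Qed.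

Lemma lsq_objective_split (D : 'M[R]_k) :
  frob2 (A - D *m B) = frob2 (A - D0 *m B) + frob2 ((D0 - D) *m B).
Proof.
rewrite -frob2D_orthogonal; first by rewrite mulmxBl addrA subrK.
by rewrite trmx_mul mulmxA lsq_residual_orthogonal mul0mx.
Qed.

Lemma lsq_unique_minimizer :
  (forall D, frob2 (A - D0 *m B) <= frob2 (A - D *m B)) /\
  (forall D', (forall D, frob2 (A - D' *m B) <= frob2 (A - D *m B)) -> D' = D0).
Proof.
split=> [D | D' D'_min]; first by rewrite (lsq_objective_split D) lerDl frob2_ge0.
have := D'_min D0; rewrite (lsq_objective_split D') gerDl => le0.
have /frob2_eq0 defect0 : frob2 ((D0 - D') *m B) = 0.
  by apply/le_anti; rewrite le0 frob2_ge0.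
apply/esym/subr0_eq.
by rewrite -(mulmxK gram_unit (D0 - D')) mulmxA defect0 !mul0mx.
Qed.

End LeastSquares.

Lemma opinf_normal_equations (R : realFieldType) (N ns k : nat)
    (U : 'M[R]_(N, k)) (X Xt : 'M[R]_(N, ns)) :
  (U^T *m X) *m (U^T *m X)^T \in unitmx ->
  opinf_unique_solution U X Xt
    (U^T *m Xt *m (U^T *m X)^T *m invmx ((U^T *m X) *m (U^T *m X)^T)).
Proof. by move=> gram_unit; exact: (lsq_unique_minimizer (U^T *m Xt) _ gram_unit). Qed.

Section Diagonal.

Context {F : fieldType}.

Lemma unitmx_diag n (d : 'rV[F]_n) : (forall j, d 0 j != 0) -> diag_mx d \in unitmx.
Proof. by move=> d_neq0; rewrite unitmxE det_diag unitfE; apply/prodf_neq0. Qed.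

Lemma invmx_diag n (d : 'rV[F]_n) :
  (forall j, d 0 j != 0) -> invmx (diag_mx d) = diag_mx (map_mx GRing.inv d).
Proof.
move=> d_neq0; have dV : diag_mx d *m diag_mx (map_mx GRing.inv d) = 1%:M.
  rewrite mulmx_diag -diag_const_mx; congr diag_mx.
  by apply/rowP => j; rewrite !mxE divff.
by rewrite -[RHS](mulKmx (unitmx_diag _ _ d_neq0)) dV mulmx1.
Qed.

Lemma diag_mx_row_sqr n (s : nat -> F) :
  diag_mx (\row_(j < n) s j) *m diag_mx (\row_(j < n) s j)
    = diag_mx (\row_(j < n) s j ^+ 2).
Proof. by rewrite mulmx_diag; congr diag_mx; apply/rowP => j; rewrite !mxE expr2. Qed.

Lemma mxsub_mul_diag m n m' n' (f : 'I_m' -> 'I_m) (g : 'I_n' -> 'I_n)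
    (M : 'M[F]_(m, n)) (d : 'rV[F]_n) :
  mxsub f g (M *m diag_mx d) = mxsub f g M *m diag_mx (colsub g d).
Proof. by rewrite !mul_mx_diag; apply/matrixP => i j; rewrite !mxE. Qed.

Lemma mxsub_mul_tr_invmx_diag k m k' (g : 'I_k' -> 'I_k) (A B : 'M[F]_(k, m))
    (d : 'rV[F]_k) :
  (forall j, d 0 j != 0) ->
  mxsub g g (A *m B^T *m invmx (diag_mx d))
    = rowsub g A *m (rowsub g B)^T *m invmx (diag_mx (colsub g d)).
Proof.
move=> d_neq0; rewrite !invmx_diag => [|j|//]; last by rewrite mxE.
by rewrite mxsub_mul_diag mxsub_mul trmx_mxsub map_mxsub.
Qed.

End Diagonal.

Section SVD.

Context {R : realFieldType} {N ns : nat} {X : 'M[R]_(N, ns)} {W : 'M[R]_N}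
  {s : nat -> R} {V : 'M[R]_ns}.
Hypothesis svdX : is_svd X W s V.

Lemma svd_proj k (f : 'I_k -> 'I_N) :
  (colsub f W)^T *m X
    = rowsub f (\matrix_(i < N, j < ns) (if i == j :> nat then s i else 0)) *m V^T.
Proof.
case: svdX => [[WtW _] _ _ _ ->].
by rewrite trmx_mxsub !mulmxA !mul_rowsub_mx WtW mul1mx.
Qed.

Lemma svd_proj_gram k (f : 'I_k -> 'I_N) :
  (forall i, f i = i :> nat) -> (k <= ns)%N ->
  ((colsub f W)^T *m X) *m ((colsub f W)^T *m X)^T = diag_mx (\row_(j < k) s j ^+ 2).
Proof.
move=> f_id k_le_ns; have [_ [VtV _] _ _ _] := svdX.
rewrite svd_proj trmx_mul trmxK mulmxA -[_ *m V^T *m V]mulmxA VtV mulmx1.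
apply/matrixP => i j; rewrite !mxE (bigD1 (widen_ord k_le_ns i)) //= big1 => [|l].
  rewrite !mxE !f_id eqxx addr0 /= (val_eqE j i) eq_sym.
  by case: eqP => [-> | _]; rewrite ?mulr1n ?mulr0n ?mulr0 ?expr2.
move=> l_neq; have /negbTE i_neq_l : (i : nat) != l by rewrite eq_sym; exact: l_neq.
by rewrite !mxE f_id i_neq_l mul0r.
Qed.

Lemma opinf_svd_solution k (f : 'I_k -> 'I_N) (Xt : 'M[R]_(N, ns)) :
  (forall i, f i = i :> nat) -> (k <= ns)%N -> (forall j, (j < k)%N -> s j != 0) ->
  opinf_unique_solution (colsub f W) X Xt
    ((colsub f W)^T *m Xt *m ((colsub f W)^T *m X)^T *m
      invmx (diag_mx (\row_(j < k) s j ^+ 2))).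
Proof.
move=> f_id k_le_ns s_neq0; rewrite -(svd_proj_gram _ _ f_id k_le_ns).
apply: opinf_normal_equations; rewrite svd_proj_gram //.
by apply: unitmx_diag => j; rewrite mxE sqrf_eq0 s_neq0.
Qed.

End SVD.

Theorem proposition1 (R : realFieldType) (N ns n : nat)
    (X Xt : 'M[R]_(N, ns)) (W : 'M[R]_N) (s : nat -> R) (V : 'M[R]_ns)
    (hn : (n <= minn N ns)%N) :
  is_svd X W s V ->
  (forall j, (j < n)%N -> s j != 0) ->
  let U : 'M[R]_(N, n) :=
    colsub (widen_ord (leq_trans hn (geq_minl N ns))) W in
  let Sigma : 'M[R]_n := diag_mx (\row_(j < n) s j) in
  let Xh := U^T *m X in
  let Xht := U^T *m Xt in
  let Dh := Xht *m Xh^T *m invmx (Sigma *m Sigma) in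
  opinf_unique_solution U X Xt Dh /\
  (forall (n' : nat) (hn' : (n' < n)%N),
     let U' : 'M[R]_(N, n') := colsub (widen_ord (ltnW hn')) U in
     let Dh' : 'M[R]_n' := mxsub (widen_ord (ltnW hn')) (widen_ord (ltnW hn')) Dh in
     opinf_unique_solution U' X Xt Dh').
Proof.
move=> svdX s_neq0 /=; rewrite diag_mx_row_sqr.
set U := colsub _ W; have n_le_ns : (n <= ns)%N := leq_trans hn (geq_minr N ns).
split; first exact: (opinf_svd_solution svdX).
move=> n' lt_n'n; set g := widen_ord _.
rewrite mxsub_mul_tr_invmx_diag => [|j]; last by rewrite mxE sqrf_eq0 s_neq0.
have -> : colsub g (\row_(j < n) s j ^+ 2) = \row_(j < n') s j ^+ 2.
  by apply/rowP => j; rewrite !mxE.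
rewrite -!mul_rowsub_mx -!trmx_mxsub -colsub_comp.
apply: (opinf_svd_solution svdX) => // [|j lt_jn'].
  exact: leq_trans (ltnW lt_n'n) n_le_ns.
exact/s_neq0/(ltn_trans lt_jn').
Qed.
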